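(* Let $a>0$, $b,d,b',d'\in\mathbb{C}$ with positive real parts, $b+d=b'+d'$, $\bar d=b$, $\bar d'=b'$, let $x,y\in\mathbb{R}$ and $k\in\mathbb{Z}_+$. Then $$\sum_{j=0}^k\frac{(-k)_j(2a+b+d)_{2j}\,j!}{(2a)_j(b+d)_j(2a+b+d+j-1)_j(a+d)_j(a+d')_j(2a+b+d+k)_j}\,p_j(x;a,b,a,d)\,p_j(y;a,b',a,d')$$ $$=\frac{(d-ix)_k(d'-iy)_k(2a+b+d)_k}{(a+d)_k(a+d')_k(b+d)_k}\,{}_4F_3\!\left({-k,\ 1-k-b-d,\ a+ix,\ a+iy\atop 2a,\ 1-k-d+ix,\ 1-k-d'+iy};1\right).$$
   Context: Continuous Hahn polynomials: $p_n(x;a,b,c,d)=i^n\frac{(a+c)_n(a+d)_n}{n!}\,{}_3F_2\!\left({-n,\ n+a+b+c+d-1,\ a+ix\atop a+c,\ a+d};1\right)$; $(\alpha)_n$ is the Pochhammer symbol. *)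

From HB Require Import structures.
From mathcomp Require Import all_boot all_order all_algebra.
From mathcomp Require Import complex.
Set Implicit Arguments. Unset Strict Implicit. Unset Printing Implicit Defensive.
Import Order.TTheory GRing.Theory Num.Theory.
Local Open Scope ring_scope.

Definition poch {C : nzRingType} (x : C) (n : nat) : C :=
  \prod_(i < n) (x + i%:R).

Definition hyp_term {C : fieldType} (num den : seq C) (z : C) (j : nat) : C :=
  (\prod_(a <- num) poch a j) / (\prod_(b <- den) poch b j) * z ^+ j / (j`!)%:R.

(* Terminating hypergeometric series whose first numerator parameter is -n:
   pFq(-n, num; den; z) = sum_{j=0}^{n} (all later terms vanish since (-n)_j = 0 for j > n). *)
Definition hypT {C : fieldType} (n : nat) (num den : seq C) (z : C) : C :=
  \sum_(j < n.+1) hyp_term (- n%:R :: num) den z j.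

Definition cHahn {R : rcfType} (n : nat) (x : R) (a b c d : R[i]) : R[i] :=
  (Complex 0 1 : R[i]) ^+ n * poch (a + c) n * poch (a + d) n / (n`!)%:R *
  hypT n [:: (n%:R + a + b + c + d - 1); a + (Complex 0 1 : R[i]) * (real_complex R x)]
         [:: a + c; a + d] 1.

Definition iC {R : rcfType} : R[i] := Complex 0 1.

From HB Require Import structures.
From mathcomp Require Import all_boot all_order all_algebra.
From mathcomp Require Import complex ring.
Import Order.TTheory GRing.Theory Num.Theory.
Local Open Scope ring_scope.

(* Put t = 2a+b+d = 2a+b'+d', s = a+d, s' = a+d', X = a+ix, Y = a+iy and
   P_n(s,X) = (X)_n / ((2a)_n (s)_n n!) ([pbasis]).  Then p_j(x;a,b,a,d) is
   i^j (2a)_j (s)_j / j! * sum_n (-j)_n (t+j-1)_n P_n(s,X), so the left side is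
   sum_{n,p} P_n(s,X) P_p(s',Y) [kerL n p].  Writing (s-X)_k / (1-k-s+X)_m as
   (-1)^m (s-X)_{k-m} and expanding (X)_m (s-X)_{k-m} in the same basis by
   Chu-Vandermonde, the right side is sum_{n,p} P_n(s,X) P_p(s',Y) [kerR n p].
   Both kernels satisfy K(n,p+1) = K(n+1,p) + (mu_p - mu_n) K(n,p) with
   mu_p = p(p+t-1): [kerL] because (-j)_n (t+j-1)_n gains the factor mu_n - mu_j
   when n increases, [kerR] because its m-summands obey a three-term recurrence
   in m that is symmetric for the weight [rweight], so the difference telescopes.
   At p = 0 both equal [ker0]; for [kerL] this is a terminating balanced sum,
   evaluated by induction on k. *)

Section Pochhammer.
Context {C : numFieldType}.
Implicit Types (x z : C) (m n : nat).

Definition not_nonpos_int x := forall i : nat, x + i%:R != 0.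

Lemma poch0 x : poch x 0 = 1.
Proof. by rewrite /poch big_ord0. Qed.

Lemma pochS x n : poch x n.+1 = poch x n * (x + n%:R).
Proof. by rewrite /poch big_ord_recr. Qed.

Lemma pochSl x n : poch x n.+1 = x * poch (x + 1) n.
Proof.
rewrite /poch big_ord_recl addr0; congr (_ * _); apply: eq_bigr => i _.
by rewrite /bump /= natrD addrA.
Qed.

Lemma pochD x m n : poch x (m + n) = poch x m * poch (x + m%:R) n.
Proof.
elim: n => [|n IH]; first by rewrite addn0 poch0 mulr1.
by rewrite addnS !pochS IH natrD addrA mulrA.
Qed.

Lemma poch_oppn_eq0 j n : (j < n)%N -> poch (- j%:R : C) n = 0.
Proof. by move=> ltjn; rewrite /poch (bigD1 (Ordinal ltjn)) //= addNr mul0r. Qed.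

Lemma poch_oppnn n : poch (- n%:R : C) n = (-1) ^+ n * n`!%:R.
Proof.
elim: n => [|n IH]; first by rewrite poch0 expr0 fact0 mulr1.
rewrite pochSl (_ : - n.+1%:R + 1 = - n%:R :> C); last by rewrite -natr1; ring.
by rewrite IH factS natrM exprS; ring.
Qed.

Lemma poch_reflect z m : poch (1 - z - m%:R) m = (-1) ^+ m * poch z m.
Proof.
elim: m => [|m IH]; first by rewrite !poch0 expr0 mulr1.
rewrite pochSl (_ : 1 - z - m.+1%:R + 1 = 1 - z - m%:R); last by rewrite -natr1; ring.
by rewrite IH pochS exprS -natr1; ring.
Qed.

Lemma not_nonpos_intDn {x} n : not_nonpos_int x -> not_nonpos_int (x + n%:R).
Proof. by move=> hx i; rewrite -addrA -natrD. Qed.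

Lemma poch_neq0 {x} : not_nonpos_int x -> forall n, poch x n != 0.
Proof.
move=> hx; elim=> [|n IH]; first by rewrite poch0 oner_eq0.
by rewrite pochS mulf_neq0.
Qed.

Lemma natr_fact_neq0 n : (n`!%:R : C) != 0.
Proof. by rewrite pnatr_eq0 -lt0n fact_gt0. Qed.

Lemma signr_sqr n : ((-1) ^+ n * (-1) ^+ n : C) = 1.
Proof. by rewrite -exprMn mulrNN mulr1 expr1n. Qed.

Lemma poch_oppn_pascal N r :
  poch (- N.+1%:R : C) r.+1 / r.+1`!%:R
  = poch (- N%:R) r.+1 / r.+1`!%:R - poch (- N%:R) r / r`!%:R.
Proof.
rewrite pochSl (pochS (- N%:R)) factS natrM.
rewrite (_ : - N.+1%:R + 1 = - N%:R :> C); last by rewrite -natr1; ring.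
have := natr_fact_neq0 r; have : (r.+1%:R : C) != 0 by rewrite pnatr_eq0.
rewrite -natr1 => ? ?; field; exact/andP.
Qed.

Lemma chu_vandermonde N s z :
  poch (s - z) N =
  \sum_(r < N.+1) poch (- N%:R) r / r`!%:R * poch z r * poch (s + r%:R) (N - r).
Proof.
elim: N s => [|N IH] s.
  by rewrite big_ord_recl big_ord0 /= !poch0 fact0 divr1 !mulr1 addr0.
rewrite pochSl (_ : s - z + 1 = (s + 1) - z); last by ring.
rewrite IH mulr_sumr [RHS]big_ord_recl /=.
under [in RHS]eq_bigr => r _ do rewrite /bump /= add1n poch_oppn_pascal !mulrBl.
set F := fun r : nat => poch (- N%:R) r / r`!%:R * poch z r * poch (s + r%:R) (N.+1 - r).
rewrite sumrB addrA [X in _ = X - _](_ : _ = \sum_(r < N.+2) F r); last first.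
  by rewrite [RHS]big_ord_recl /F /= !poch0.
rewrite [X in _ = X - _]big_ord_recr /= {2}/F poch_oppn_eq0 // !mul0r addr0 -sumrB.
apply: eq_bigr => r _; have le_rN : (r <= N)%N by rewrite -ltnS.
rewrite /F subSS subSn // pochSl (pochS z r) -natr1 -addrA (addrC 1) addrA.
by rewrite (addrAC s); ring.
Qed.

Lemma poch_split_reflect x {k m} : (m <= k)%N ->
  poch x k = (-1) ^+ m * poch x (k - m) * poch (1 - k%:R - x) m.
Proof.
move=> le_mk; rewrite (_ : 1 - k%:R - x = 1 - (x + (k - m)%:R) - m%:R).
  by rewrite poch_reflect mulrACA signr_sqr mul1r -pochD subnK.
by rewrite natrB //; ring.
Qed.

Lemma poch_reflect_neq0 {x k m} : not_nonpos_int x -> (m <= k)%N ->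
  poch (1 - k%:R - x) m != 0.
Proof.
move=> hx le_mk; apply: contraTneq (poch_neq0 hx k) => reflect0.
by rewrite (poch_split_reflect x le_mk) reflect0 mulr0 eqxx.
Qed.

End Pochhammer.

Lemma sum_mul_sum2 {R : pzSemiRingType} {K} (w : nat -> R) (A B : nat -> nat -> R) :
  \sum_(j < K) w j * (\sum_(n < K) A n j) * (\sum_(p < K) B p j)
  = \sum_(n < K) \sum_(p < K) \sum_(j < K) w j * A n j * B p j.
Proof.
under eq_bigr => j _.
  rewrite [w j * _]mulr_sumr mulr_suml; under eq_bigr => n _ do rewrite mulr_sumr.
  over.
by rewrite exchange_big; apply: eq_bigr => n _; rewrite exchange_big.
Qed.

Lemma backward_eq0 (R : idomainType) (c f : nat -> R) N :
  (forall n, (n < N)%N -> c n != 0) -> (forall n, c n * f n + f n.+1 = 0) ->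
  f N = 0 -> forall n, (n <= N)%N -> f n = 0.
Proof.
move=> c_neq0 rec fN n le_nN; rewrite -(subKn le_nN).
elim: (N - n)%N (leq_subr n N) => [|i IH] lt_iN; first by rewrite subn0.
have lt_mN : (N - i.+1 < N)%N by rewrite ltn_subrL (leq_ltn_trans (leq0n i) lt_iN).
have := rec (N - i.+1)%N; rewrite subnSK // (IH (ltnW lt_iN)) addr0 => /eqP.
by rewrite mulf_eq0 (negbTE (c_neq0 _ lt_mN)) => /eqP.
Qed.

Section LeftKernel.
Context {C : numFieldType}.
Variables (al t : C).
Hypotheses (t_reg : not_nonpos_int t) (tal_reg : not_nonpos_int (t - al)).

Definition eig (p : nat) : C := p%:R * (p%:R + t - 1).

Definition hahn_num (n j : nat) : C := poch (- j%:R) n * poch (t + j%:R - 1) n.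

Definition hahn_weight (k j : nat) : C :=
  (-1) ^+ j * poch (- k%:R) j * poch t (2 * j) * poch al j /
  (poch (t - al) j * poch (t + j%:R - 1) j * poch (t + k%:R) j * j`!%:R).

Definition kerL (k n p : nat) : C :=
  \sum_(j < k.+1) hahn_weight k j * hahn_num n j * hahn_num p j.

Definition ker0 (k n : nat) : C :=
  poch t k / poch (t - al) k * poch al n * poch (- k%:R) n.

Lemma eigB m n : eig m - eig n = (m%:R - n%:R) * (t + (m + n)%:R - 1).
Proof. by rewrite /eig natrD; ring. Qed.

Lemma hahn_num0 j : hahn_num 0 j = 1.
Proof. by rewrite /hahn_num !poch0 mulr1. Qed.

Lemma hahn_numS n j : hahn_num n.+1 j = hahn_num n j * (eig n - eig j).
Proof. by rewrite /hahn_num /eig !pochS; ring. Qed.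

Lemma hahn_num_eq0 n j : (j < n)%N -> hahn_num n j = 0.
Proof. by move=> ltjn; rewrite /hahn_num poch_oppn_eq0 // mul0r. Qed.

Lemma poch_shift_neq0 j : poch (t + j%:R - 1) j != 0.
Proof.
case: j => [|j]; first by rewrite poch0 oner_eq0.
apply: poch_neq0 => i; rewrite (_ : _ + i%:R = t + (j + i)%:R) ?t_reg //.
by rewrite !natrD -natr1; ring.
Qed.

Lemma hahn_weightS k j :
  hahn_weight k.+1 j * (eig k.+1 - eig j) = eig k.+1 * hahn_weight k j.
Proof.
case: j => [|j]; first by rewrite /hahn_weight /eig !poch0 fact0; ring.
rewrite /hahn_weight (pochSl (- k.+1%:R)) (pochS (- k%:R)) (pochS (t + k.+1%:R)).
rewrite (pochSl (t + k%:R)) -[t + k%:R + 1]addrA natr1.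
rewrite (_ : - k.+1%:R + 1 = - k%:R :> C); last by rewrite -natr1; ring.
have := poch_neq0 tal_reg j.+1; have := poch_shift_neq0 j.+1.
have := poch_neq0 (not_nonpos_intDn k.+1 t_reg) j.
have := not_nonpos_intDn k.+1 t_reg j; have := t_reg k; have := natr_fact_neq0 (C := C) j.+1.
rewrite /eig natrD => *; field.
by rewrite nat1r; repeat (apply/andP; split).
Qed.

Lemma kerL_col0_rec k n :
  (eig k.+1 - eig n) * kerL k.+1 n 0 + kerL k.+1 n.+1 0 = eig k.+1 * kerL k n 0.
Proof.
rewrite /kerL mulr_sumr -big_split /=.
rewrite (eq_bigr (fun j : 'I_k.+2 => eig k.+1 * (hahn_weight k j * hahn_num n j))).
  rewrite big_ord_recr /= {2}/hahn_weight poch_oppn_eq0 // !(mul0r, mulr0) addr0.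
  by rewrite mulr_sumr; apply: eq_bigr => j _; rewrite hahn_num0 mulr1.
move=> j _; rewrite !hahn_num0 !mulr1 hahn_numS.
transitivity (hahn_weight k.+1 j * (eig k.+1 - eig j) * hahn_num n j); first by ring.
by rewrite hahn_weightS; ring.
Qed.

Lemma ker0_rec k n :
  (eig k.+1 - eig n) * ker0 k.+1 n + ker0 k.+1 n.+1 = eig k.+1 * ker0 k n.
Proof.
have oppSn1 : - k.+1%:R + 1 = - k%:R :> C by rewrite -natr1; ring.
have := poch_neq0 tal_reg k; have := tal_reg k.
rewrite /ker0 eigB /eig (pochS t k) (pochS (t - al) k) (pochS al n).
by case: n => [|n]; rewrite !(pochSl (- k.+1%:R)) oppSn1 ?poch0 ?(pochS (- k%:R) n)
  -?natr1 ?natrD -?natr1 => *; field; exact/andP.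
Qed.

Lemma kerL_diag k : kerL k k 0 = ker0 k k.
Proof.
rewrite /kerL big_ord_recr /= big1 => [|j _]; last first.
  by rewrite hahn_num_eq0 ?mulr0 ?mul0r.
(* [field] cannot use [(-1) ^+ k * (-1) ^+ k = 1]: insert it on the right so
   that both sides carry the same powers of [-1]. *)
rewrite add0r hahn_num0 mulr1 -[ker0 k k]mul1r -[X in _ = X * _](signr_sqr k).
rewrite /hahn_weight /hahn_num /ker0 poch_oppnn mul2n -addnn pochD.
have := poch_neq0 tal_reg k; have := poch_shift_neq0 k.
have := poch_neq0 (not_nonpos_intDn k t_reg) k; have := natr_fact_neq0 (C := C) k.
by move=> *; field; repeat (apply/andP; split).
Qed.

Lemma kerL_rec k n p :
  kerL k n p.+1 = kerL k n.+1 p + (eig p - eig n) * kerL k n p.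
Proof.
rewrite /kerL mulr_sumr -big_split /=; apply: eq_bigr => j _.
by rewrite !hahn_numS; ring.
Qed.

Lemma kerL_eq0 k n p : (k < n)%N -> kerL k n p = 0.
Proof.
move=> ltkn; rewrite /kerL big1 // => j _.
by rewrite hahn_num_eq0 ?mulr0 ?mul0r // (leq_trans _ ltkn).
Qed.

Lemma ker0_eq0 k n : (k < n)%N -> ker0 k n = 0.
Proof. by move=> ltkn; rewrite /ker0 poch_oppn_eq0 // mulr0. Qed.

Lemma kerL_col0 k n : kerL k n 0 = ker0 k n.
Proof.
elim: k n => [|k IH] n.
  by case: n => [|n]; [exact: kerL_diag | rewrite kerL_eq0 ?ker0_eq0].
have [lt_kn | le_nk] := ltnP k.+1 n; first by rewrite kerL_eq0 ?ker0_eq0.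
(* [kerL - ker0] vanishes at [n = k+1] and obeys a first-order recurrence in [n]
   whose coefficient [eig (k+1) - eig n] is nonzero below [k+1]. *)
apply/eqP; rewrite -subr_eq0; apply/eqP; move: n le_nk.
apply: (@backward_eq0 _ (fun n => eig k.+1 - eig n)).
- move=> n lt_nk; rewrite eigB mulf_neq0 //.
    by rewrite -natrB ?(ltnW lt_nk) // pnatr_eq0 subn_eq0 -ltnNge.
  by rewrite addSn -natr1 addrA addrK.
- by move=> n; rewrite mulrBr addrACA -opprD kerL_col0_rec ker0_rec IH subrr.
- by rewrite kerL_diag subrr.
Qed.

End LeftKernel.

Section RightKernel.
Context {C : numFieldType}.
Variables (al t : C) (k : nat).

Definition vcoef (m p : nat) : C :=
  if (m <= p)%N then poch (m%:R - k%:R) (p - m) / (p - m)`!%:R else 0.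

Definition hcoef (m p : nat) : C := poch al p * p`!%:R * vcoef m p.

Definition jac_up (m : nat) : C := - ((k%:R - m%:R) * (t - al + k%:R - m%:R - 1)).
Definition jac_diag (m : nat) : C :=
  (k%:R - m%:R) * (al + m%:R) + m%:R * (t - al + k%:R - m%:R).
Definition jac_low (m : nat) : C := - (m%:R * (al + m%:R - 1)).

Lemma vcoef_addn m r : vcoef m (m + r) = poch (m%:R - k%:R) r / r`!%:R.
Proof. by rewrite /vcoef leq_addr addKn. Qed.

Lemma vcoef_diag m : vcoef m m = 1.
Proof. by rewrite -[m in vcoef _ m]addn0 vcoef_addn poch0 fact0 divr1. Qed.

Lemma vcoef_lt {m p} : (p < m)%N -> vcoef m p = 0.
Proof. by rewrite /vcoef ltnNge => /negbTE ->. Qed.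

(* The factor [jac_low m] makes this hold also for [m = 0], where [m.-1] truncates. *)
Lemma jac_low_vcoef m r :
  jac_low m * vcoef m.-1 (m + r)
  = jac_low m * (m%:R - 1 - k%:R) * poch (m%:R - k%:R) r / r.+1`!%:R.
Proof.
case: m => [|m]; first by rewrite /jac_low !mul0r oppr0 !mul0r.
rewrite addSnnS vcoef_addn pochSl -natr1 addrK (addrAC _ 1).
by rewrite mulrA mulrA.
Qed.

Lemma vcoef_rec m p :
  (al + p%:R) * p.+1%:R * vcoef m p.+1
  = (eig t p - jac_diag m) * vcoef m p - jac_up m * vcoef m.+1 p
    - jac_low m * vcoef m.-1 p.
Proof.
have [lt_pm | /subnKC <-] := ltnP p m.
  rewrite (vcoef_lt lt_pm) (@vcoef_lt m.+1 p (ltnW lt_pm)) !mulr0 !subr0 sub0r.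
  move: lt_pm; rewrite leq_eqVlt => /predU1P [<- | lt_p1m] /=.
    by rewrite !vcoef_diag /jac_low -natr1; ring.
  have lt_p_m1 : (p < m.-1)%N by case: m lt_p1m.
  by rewrite (vcoef_lt lt_p1m) (vcoef_lt lt_p_m1) !mulr0 oppr0.
move: (p - m)%N => r; rewrite -addnS !vcoef_addn jac_low_vcoef.
case: r => [|r].
  rewrite addn0 vcoef_lt // !pochS !poch0 /jac_low /jac_diag /eig natrD.
  by rewrite !factS fact0 -natr1; field.
rewrite -addSnnS vcoef_addn !(pochSl (m%:R - k%:R)) (pochS (m%:R - k%:R + 1) r).
rewrite (_ : m%:R - k%:R + 1 = m.+1%:R - k%:R); last by rewrite -natr1; ring.
rewrite /jac_low /jac_diag /jac_up /eig !factS !natrM !natrD -!natr1; field.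
by rewrite !natr1 !pnatr_eq0 andbT -lt0n fact_gt0.
Qed.

Lemma hcoef_rec m p :
  hcoef m p.+1 = (eig t p - jac_diag m) * hcoef m p - jac_up m * hcoef m.+1 p
                 - jac_low m * hcoef m.-1 p.
Proof.
rewrite /hcoef pochS factS natrM.
transitivity (poch al p * p`!%:R * ((al + p%:R) * p.+1%:R * vcoef m p.+1)); first by ring.
by rewrite vcoef_rec; ring.
Qed.

Hypothesis al_reg : not_nonpos_int al.

Definition rweight (m : nat) : C :=
  poch (- k%:R) m * poch (1 - k%:R - (t - al)) m / (poch al m * m`!%:R).

Definition casoratian (n p m : nat) : C :=
  hcoef m n * hcoef m.+1 p - hcoef m.+1 n * hcoef m p.

Definition kerR (n p : nat) : C :=
  poch t k / poch (t - al) k * \sum_(m < k.+1) rweight m * hcoef m n * hcoef m p.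

Lemma rweight_sym m : rweight m.+1 * jac_low m.+1 = rweight m * jac_up m.
Proof.
have := poch_neq0 al_reg m; have := al_reg m.
rewrite /rweight !pochS factS natrM /jac_low /jac_up -natr1 => *; field.
by rewrite natr1 !pnatr_eq0 -lt0n fact_gt0; repeat (apply/andP; split).
Qed.

Lemma rweight_casoratian n p m :
  rweight m * (hcoef m n.+1 * hcoef m p + (eig t p - eig t n) * hcoef m n * hcoef m p
               - hcoef m n * hcoef m p.+1)
  = rweight m.+1 * jac_low m.+1 * casoratian n p m
    - rweight m * jac_low m * casoratian n p m.-1.
Proof.
have jac_low0 : jac_low 0 = 0 by rewrite /jac_low mul0r oppr0.
by rewrite rweight_sym !hcoef_rec /casoratian; case: m => [|m]; rewrite ?jac_low0 /=; ring.
Qed.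

Lemma kerR_rec n p : kerR n p.+1 = kerR n.+1 p + (eig t p - eig t n) * kerR n p.
Proof.
have tele : \sum_(0 <= m < k.+1) rweight m * (hcoef m n.+1 * hcoef m p
      + (eig t p - eig t n) * hcoef m n * hcoef m p - hcoef m n * hcoef m p.+1) = 0.
  rewrite (@telescope_sumr_eq _ _ _ (fun m => rweight m * jac_low m * casoratian n p m.-1)) //.
    by rewrite /= rweight_sym /jac_up /jac_low; ring.
  by move=> m _; rewrite rweight_casoratian.
rewrite big_mkord in tele.
rewrite /kerR (mulrCA (eig t p - eig t n)) -mulrDr; congr (_ * _).
rewrite -[LHS]addr0 -[X in _ + X]tele mulr_sumr -!big_split /=.
by apply: eq_bigr => m _; ring.
Qed.

Lemma kerR_col0 n : kerR n 0 = ker0 al t k n.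
Proof.
rewrite /kerR /ker0 -[RHS]mulrA; congr (_ * _).
rewrite big_ord_recl big1 => [|m _]; last by rewrite /hcoef [vcoef _ 0]vcoef_lt ?mulr0.
rewrite /rweight /hcoef vcoef_diag -[n in vcoef 0 n]add0n vcoef_addn.
have := natr_fact_neq0 (C := C) n.
by rewrite !poch0 fact0 sub0r => *; field.
Qed.

End RightKernel.

Lemma kerL_kerR {C : numFieldType} (al t : C) k n p :
  not_nonpos_int al -> not_nonpos_int t -> not_nonpos_int (t - al) ->
  kerL al t k n p = kerR al t k n p.
Proof.
move=> al_reg t_reg tal_reg; elim: p n => [|p IH] n.
  by rewrite kerL_col0 ?kerR_col0.
by rewrite kerL_rec kerR_rec // !IH.
Qed.

Lemma vcoef_vandermonde {C : numFieldType} k m (S Z : C) : (m <= k)%N ->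
  poch Z m * poch (S - Z) (k - m) =
  \sum_(n < k.+1) vcoef k m n * poch Z n * poch (S + n%:R) (k - n).
Proof.
move=> le_mk; rewrite (_ : S - Z = S + m%:R - (Z + m%:R)); last by ring.
set F := fun n => vcoef k m n * poch Z n * poch (S + n%:R) (k - n).
rewrite chu_vandermonde mulr_sumr -(big_mkord xpredT F).
rewrite (big_cat_nat (leq0n m) (leqW le_mk)) /= [X in _ = X + _]big_nat_cond.
rewrite [X in _ = X + _]big1 ?add0r => [|n /andP[/andP[_ lt_nm] _]]; last first.
  by rewrite /F vcoef_lt ?mul0r.
have -> : \sum_(m <= i < k.+1) F i = \sum_(r < (k - m).+1) F (m + r).
  rewrite -{1}[m]add0n big_addn subSn // big_mkord.
  by apply: eq_bigr => r _; rewrite addnC.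
apply: eq_bigr => r _; rewrite /F vcoef_addn pochD natrB // opprB subnDA natrD addrA.
by ring.
Qed.

Section HahnExpansion.
Context {C : numFieldType}.
Variables (al t : C) (k : nat).
Hypotheses (al_reg : not_nonpos_int al) (t_reg : not_nonpos_int t)
  (tal_reg : not_nonpos_int (t - al)).

Definition pbasis (S Z : C) (n : nat) : C := poch Z n / (poch al n * poch S n * n`!%:R).

Lemma hypT_hahn j S Z : not_nonpos_int S -> (j <= k)%N ->
  hypT j [:: j%:R + t - 1; Z] [:: al; S] 1 = \sum_(n < k.+1) hahn_num t n j * pbasis S Z n.
Proof.
move=> S_reg le_jk; rewrite /hypT (big_ord_widen k.+1 _ (le_jk : j.+1 <= k.+1)%N) big_mkcond.
apply: eq_bigr => n _; case: ifP => [_ | /negbT]; last first.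
  by rewrite -leqNgt => lt_jn; rewrite hahn_num_eq0 ?mul0r.
have := poch_neq0 al_reg n; have := poch_neq0 S_reg n; have := natr_fact_neq0 (C := C) n.
rewrite /hyp_term !big_cons !big_nil expr1n /hahn_num /pbasis (addrC _ t) => *.
by field; repeat (apply/andP; split).
Qed.

Lemma sum_hcoef_pbasis m S Z : not_nonpos_int S -> (m <= k)%N ->
  \sum_(n < k.+1) hcoef al k m n * pbasis S Z n = poch Z m * poch (S - Z) (k - m) / poch S k.
Proof.
move=> S_reg le_mk; rewrite vcoef_vandermonde // mulr_suml; apply: eq_bigr => n _.
have le_nk : (n <= k)%N by rewrite -ltnS.
have := poch_neq0 al_reg n; have := poch_neq0 S_reg n; have := natr_fact_neq0 (C := C) n.
have := poch_neq0 (not_nonpos_intDn n S_reg) (k - n).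
rewrite -[in poch S k](subnKC le_nk) pochD /hcoef /pbasis => *.
by field; repeat (apply/andP; split).
Qed.

Variables (s s' X Y : C).
Hypotheses (s_reg : not_nonpos_int s) (s'_reg : not_nonpos_int s')
  (sX_reg : not_nonpos_int (s - X)) (s'Y_reg : not_nonpos_int (s' - Y)).

Lemma lhs_expand (I : C) : I * I = -1 ->
  \sum_(j < k.+1)
     (poch (- k%:R) j * poch t (2 * j) * j`!%:R
      / (poch al j * poch (t - al) j * poch (t + j%:R - 1) j
         * poch s j * poch s' j * poch (t + k%:R) j))
     * (I ^+ j * poch al j * poch s j / j`!%:R * hypT j [:: j%:R + t - 1; X] [:: al; s] 1)
     * (I ^+ j * poch al j * poch s' j / j`!%:R * hypT j [:: j%:R + t - 1; Y] [:: al; s'] 1)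
  = \sum_(n < k.+1) \sum_(p < k.+1) pbasis s X n * pbasis s' Y p * kerL al t k n p.
Proof.
move=> sqrI.
rewrite (eq_bigr (fun j : 'I_k.+1 => hahn_weight al t k j
    * (\sum_(n < k.+1) hahn_num t n j * pbasis s X n)
    * (\sum_(p < k.+1) hahn_num t p j * pbasis s' Y p))) => [|j _]; last first.
  have le_jk : (j <= k)%N by rewrite -ltnS.
  have signI : (-1) ^+ j = I ^+ j * I ^+ j :> C by rewrite -exprMn sqrI.
  rewrite !hypT_hahn // /hahn_weight signI.
  have := poch_neq0 al_reg j; have := poch_neq0 tal_reg j; have := poch_shift_neq0 _ t_reg j.
  have := poch_neq0 s_reg j; have := poch_neq0 s'_reg j; have := natr_fact_neq0 (C := C) j.
  have := poch_neq0 (not_nonpos_intDn k t_reg) j.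
  by move=> *; field; repeat (apply/andP; split).
rewrite (sum_mul_sum2 (hahn_weight al t k) (fun n j => hahn_num t n j * pbasis s X n)
  (fun p j => hahn_num t p j * pbasis s' Y p)); apply: eq_bigr => n _; apply: eq_bigr => p _.
by rewrite /kerL mulr_sumr; apply: eq_bigr => j _; ring.
Qed.

Lemma rhs_expand :
  poch (s - X) k * poch (s' - Y) k * poch t k / (poch s k * poch s' k * poch (t - al) k)
  * hypT k [:: 1 - k%:R - (t - al); X; Y] [:: al; 1 - k%:R - s + X; 1 - k%:R - s' + Y] 1
  = \sum_(n < k.+1) \sum_(p < k.+1) pbasis s X n * pbasis s' Y p * kerR al t k n p.
Proof.
rewrite /hypT mulr_sumr.
rewrite (eq_bigr (fun m : 'I_k.+1 => poch t k / poch (t - al) k * rweight al t k m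
    * (\sum_(n < k.+1) hcoef al k m n * pbasis s X n)
    * (\sum_(p < k.+1) hcoef al k m p * pbasis s' Y p))) => [|m _]; last first.
  have le_mk : (m <= k)%N by rewrite -ltnS.
  rewrite !sum_hcoef_pbasis // /hyp_term !big_cons !big_nil expr1n /rweight.
  rewrite (poch_split_reflect (s - X) le_mk) (poch_split_reflect (s' - Y) le_mk).
  rewrite (_ : 1 - k%:R - s + X = 1 - k%:R - (s - X)); last by ring.
  rewrite (_ : 1 - k%:R - s' + Y = 1 - k%:R - (s' - Y)); last by ring.
  rewrite -[RHS]mul1r -[X in _ = X * _](signr_sqr m).
  have := poch_reflect_neq0 sX_reg le_mk; have := poch_reflect_neq0 s'Y_reg le_mk.
  have := poch_neq0 al_reg m; have := poch_neq0 s_reg k; have := poch_neq0 s'_reg k.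
  have := poch_neq0 tal_reg k; have := natr_fact_neq0 (C := C) m.
  by move=> *; field; repeat (apply/andP; split).
rewrite (sum_mul_sum2 (fun m => poch t k / poch (t - al) k * rweight al t k m)
  (fun n m => hcoef al k m n * pbasis s X n) (fun p m => hcoef al k m p * pbasis s' Y p)).
apply: eq_bigr => n _; apply: eq_bigr => p _.
by rewrite /kerR !mulr_sumr; apply: eq_bigr => m _; ring.
Qed.

Theorem hahn_product_sum (I : C) : I * I = -1 ->
  \sum_(j < k.+1)
     (poch (- k%:R) j * poch t (2 * j) * j`!%:R
      / (poch al j * poch (t - al) j * poch (t + j%:R - 1) j
         * poch s j * poch s' j * poch (t + k%:R) j))
     * (I ^+ j * poch al j * poch s j / j`!%:R * hypT j [:: j%:R + t - 1; X] [:: al; s] 1)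
     * (I ^+ j * poch al j * poch s' j / j`!%:R * hypT j [:: j%:R + t - 1; Y] [:: al; s'] 1)
  = poch (s - X) k * poch (s' - Y) k * poch t k / (poch s k * poch s' k * poch (t - al) k)
    * hypT k [:: 1 - k%:R - (t - al); X; Y] [:: al; 1 - k%:R - s + X; 1 - k%:R - s' + Y] 1.
Proof.
move=> sqrI; rewrite lhs_expand // rhs_expand.
by apply: eq_bigr => n _; apply: eq_bigr => p _; rewrite kerL_kerR.
Qed.

End HahnExpansion.

Section ComplexParameters.
Variable R : rcfType.
Local Open Scope complex_scope.

Lemma ReD (z w : R[i]) : complex.Re (z + w) = complex.Re z + complex.Re w.
Proof. by case: z; case: w. Qed.

Lemma ReN (z : R[i]) : complex.Re (- z) = - complex.Re z.
Proof. by case: z. Qed.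

Lemma Re_iC (r : R) : complex.Re (iC * r%:C) = 0.
Proof. by rewrite /= !mul0r !mul1r subrr. Qed.

Lemma Re_gt0_not_nonpos_int (z : R[i]) : 0 < complex.Re z -> not_nonpos_int z.
Proof.
case: z => u v /= u_gt0 i; rewrite -(rmorph_nat (real_complex R)).
by apply/eqP => /(congr1 (@complex.Re R)) /= /eqP; rewrite gt_eqF // ltr_wpDr.
Qed.

Lemma cHahn_hypT n (x : R) (a b d : R[i]) :
  cHahn n x a b a d = iC ^+ n * poch (2 * a) n * poch (a + d) n / n`!%:R
    * hypT n [:: n%:R + (2 * a + b + d) - 1; a + iC * x%:C] [:: 2 * a; a + d] 1.
Proof.
rewrite /cHahn (_ : a + a = 2 * a); last by ring.
by rewrite (_ : n%:R + a + b + a + d - 1 = n%:R + (2 * a + b + d) - 1); last ring.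
Qed.

End ComplexParameters.

Local Open Scope complex_scope.

Theorem corollary2p5 (R : rcfType) (a : R) (b d b' d' : R[i]) (x y : R) (k : nat) :
  0 < a ->
  0 < complex.Re b -> 0 < complex.Re d -> 0 < complex.Re b' -> 0 < complex.Re d' ->
  b + d = b' + d' -> d^* = b -> d'^* = b' ->
  let A := a%:C in
  \sum_(j < k.+1)
     (poch (- k%:R) j * poch (2 * A + b + d) (2 * j) * (j`!)%:R
      / (poch (2 * A) j * poch (b + d) j * poch (2 * A + b + d + j%:R - 1) j
         * poch (A + d) j * poch (A + d') j * poch (2 * A + b + d + k%:R) j))
     * cHahn j x A b A d * cHahn j y A b' A d'
  = poch (d - iC * x%:C) k * poch (d' - iC * y%:C) k * poch (2 * A + b + d) k
      / (poch (A + d) k * poch (A + d') k * poch (b + d) k)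
    * hypT k [:: 1 - k%:R - b - d; A + iC * x%:C; A + iC * y%:C]
             [:: 2 * A; 1 - k%:R - d + iC * x%:C; 1 - k%:R - d' + iC * y%:C] 1.
Proof.
move=> a_gt0 Reb_gt0 Red_gt0 Reb'_gt0 Red'_gt0 bd_eq _ _ A.
have t'E : 2 * A + b' + d' = 2 * A + b + d by rewrite -!addrA bd_eq.
under eq_bigr => j _ do rewrite !cHahn_hypT t'E.
rewrite (_ : b + d = 2 * A + b + d - 2 * A); last by ring.
have ReA : complex.Re A = a by [].
have Re_sub_iC z r : complex.Re (A + z - (A + iC * r%:C)) = complex.Re z.
  by rewrite (_ : _ - _ = z - iC * r%:C) ?ReD ?ReN ?Re_iC ?subr0 //; ring.
rewrite hahn_product_sum; last 8 first; try apply: Re_gt0_not_nonpos_int.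
- by rewrite mulr_natl mulr2n ReD ReA addr_gt0.
- by rewrite !ReD mulr_natl mulr2n ReD ReA !addr_gt0.
- by rewrite (_ : _ - _ = b + d) ?ReD ?addr_gt0 //; ring.
- by rewrite ReD ReA addr_gt0.
- by rewrite ReD ReA addr_gt0.
- by rewrite Re_sub_iC.
- by rewrite Re_sub_iC.
- by rewrite -expr2 sqr_i.
by congr (poch _ _ * poch _ _ * _ / _ * hypT _ [:: _; _; _] [:: _; _; _] _); ring.
Qed.
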